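(* In type $A_{n-1}$, every intersection of shards of the Coxeter arrangement equals $C(w)$ for some $w\in S_n$, and for every $w\in S_n$ the cone $C(w)$ is an intersection of shards.
   Context: Shards. Let $V$ be a real Euclidean space with inner product $\langle\cdot,\cdot\rangle$, $\Phi\subset V$ a finite root system with a chosen set of positive roots $\Phi^+$, and $\mathcal A=\{H_\beta:\beta\in\Phi^+\}$ with $H_\beta=\{\lambda\in V:\langle\lambda,\beta\rangle=0\}$ (the Coxeter arrangement). The base region is $B=\{\lambda\in V:\langle\lambda,\beta\rangle>0\text{ for all }\beta\in\Phi^+\}$. For distinct $H,H'\in\mathcal A$ let $\mathcal A(H,H')$ be the set of hyperplanes of $\mathcal A$ containing $H\cap H'$ (a rank two subarrangement). Exactly one connected component $B'$ of $V\setminus\bigcup\mathcal A(H,H')$ contains $B$, and exactly two hyperplanes of $\mathcal A(H,H')$ contain facets of the closure of $B'$; these are the basic hyperplanes of $\mathcal A(H,H')$. Each non-basic $H''\in\mathcal A(H,H')$ is said to be cut by each of the two basic hyperplanes of $\mathcal A(H,H')$. For $H\in\mathcal A$ let $L_H$ be the set of hyperplanes of $\mathcal A$ that cut $H$ in some rank two subarrangement; the shards of $H$ are the closures of the connected components of $H\setminus\bigcup_{H_\gamma\in L_H}(H\cap H_\gamma)$. A shard of $\mathcal A$ is a shard of some $H\in\mathcal A$. An intersection of shards is $\bigcap_{\Sigma\in S}\Sigma$ for a finite set $S$ of shards (the empty intersection is $V$). Type $A_{n-1}$: $V=\{x\in\mathbb R^n:\sum_i x_i=0\}$, $\Phi^+=\{\varepsilon_j-\varepsilon_i:1\le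 i<j\le n\}$, hyperplanes $H_{i,j}=\{x\in V:x_i=x_j\}$, $B=\{x_1<\cdots<x_n\}$. For $w=w(1)\cdots w(n)\in S_n$, the blocks of $w$ are the sets of letters of its maximal decreasing runs (maximal consecutive factors $w(a)>w(a+1)>\cdots>w(b)$). The cone $C(w)\subseteq V$ is the set of $x\in V$ such that: (i) $x_i=x_j$ whenever $i,j$ lie in the same block of $w$; (ii) whenever $i<k<j$ with $i,j$ in the same block and $k$ not in that block, $x_k\le x_i$ if $k$ appears to the left of $i$ in $w$, and $x_i\le x_k$ if $k$ appears to the right of $i$ in $w$. *)

From Stdlib Require Import Reals Lra Lia Arith List Permutation.
Import ListNotations.
Open Scope R_scope.

(* ---------- Ambient space of type A_{n-1} ----------
   Points are x : nat -> R, coordinates x 0, ..., x (n-1) (0-indexed);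
   we require x i = 0 for i >= n so each point of V has a unique code. *)
Definition sumR (n : nat) (x : nat -> R) : R :=
  fold_right Rplus 0 (map x (seq 0 n)).

Definition inV (n : nat) (x : nat -> R) : Prop :=
  (forall i, (n <= i)%nat -> x i = 0) /\ sumR n x = 0.

(* A hyperplane H_{i,j} (i < j < n) is encoded by the pair (i,j). *)
Definition hyp := (nat * nat)%type.
Definition validH (n : nat) (h : hyp) : Prop := (fst h < snd h < n)%nat.
Definition onH (h : hyp) (x : nat -> R) : Prop := x (fst h) = x (snd h).

Definition inB (n : nat) (x : nat -> R) : Prop :=
  inV n x /\ forall i j, (i < j < n)%nat -> x i < x j.

Definition path_in (n : nat) (S : (nat -> R) -> Prop) (x y : nat -> R) : Prop :=
  exists g : R -> nat -> R,
    g 0 = x /\ g 1 = y /\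
    (forall t, 0 <= t <= 1 -> S (g t)) /\
    (forall i, (i < n)%nat -> forall t, 0 <= t <= 1 ->
        continuity_pt (fun s => g s i) t).

Definition component (n : nat) (S : (nat -> R) -> Prop) (p : nat -> R)
  : (nat -> R) -> Prop :=
  fun y => S y /\ path_in n S p y.

Definition closure (n : nat) (P : (nat -> R) -> Prop) : (nat -> R) -> Prop :=
  fun x => inV n x /\
    forall eps, 0 < eps ->
      exists y, P y /\ forall i, (i < n)%nat -> Rabs (x i - y i) < eps.

(* The closed cone C (a subset of V) has a facet contained in the
   hyperplane K: K /\ C contains a nonempty relatively open subset of K. *)
Definition hasFacetIn (n : nat) (C : (nat -> R) -> Prop) (K : hyp) : Prop :=
  exists p, inV n p /\ onH K p /\ C p /\
    exists eps, 0 < eps /\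
      forall q, inV n q -> onH K q ->
        (forall i, (i < n)%nat -> Rabs (q i - p i) < eps) -> C q.

Definition inA2 (n : nat) (H1 H2 K : hyp) : Prop :=
  validH n K /\
  forall x, inV n x -> onH H1 x -> onH H2 x -> onH K x.

Definition complA2 (n : nat) (H1 H2 : hyp) : (nat -> R) -> Prop :=
  fun x => inV n x /\ forall K, inA2 n H1 H2 K -> ~ onH K x.

Definition Bprime (n : nat) (H1 H2 : hyp) : (nat -> R) -> Prop :=
  fun y => exists b, inB n b /\ component n (complA2 n H1 H2) b y.

Definition basic (n : nat) (H1 H2 K : hyp) : Prop :=
  inA2 n H1 H2 K /\ hasFacetIn n (closure n (Bprime n H1 H2)) K.

Definition cuts (n : nat) (K H : hyp) : Prop :=
  exists H1 H2, validH n H1 /\ validH n H2 /\ H1 <> H2 /\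
    inA2 n H1 H2 H /\ ~ basic n H1 H2 H /\ basic n H1 H2 K.

Definition shardDomain (n : nat) (H : hyp) : (nat -> R) -> Prop :=
  fun x => inV n x /\ onH H x /\ forall K, validH n K -> cuts n K H -> ~ onH K x.

(* The shard of H which is the closure of the component of shardDomain H
   containing p (meaningful when validH n H and shardDomain n H p). *)
Definition shard (n : nat) (H : hyp) (p : nat -> R) : (nat -> R) -> Prop :=
  closure n (component n (shardDomain n H) p).

Definition shardData (n : nat) (d : hyp * (nat -> R)) : Prop :=
  validH n (fst d) /\ shardDomain n (fst d) (snd d).

Definition shardInter (n : nat) (l : list (hyp * (nat -> R))) : (nat -> R) -> Prop :=
  fun x => inV n x /\ Forall (fun d => shard n (fst d) (snd d) x) l.

Definition isShardIntersection (n : nat) (X : (nat -> R) -> Prop) : Prop :=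
  exists l, Forall (shardData n) l /\ forall x, X x <-> shardInter n l x.

(* ---------- Permutations and the cones C(w) ----------
   w is given in one-line notation as a list of the letters 0..n-1. *)
Definition isPerm (n : nat) (w : list nat) : Prop := Permutation w (seq 0 n).

(* letters a and b lie in the same maximal decreasing run of w *)
Definition sameBlock (w : list nat) (a b : nat) : Prop :=
  exists p q, (p < length w)%nat /\ (q < length w)%nat /\
    nth p w 0%nat = a /\ nth q w 0%nat = b /\
    forall k, (Nat.min p q <= k < Nat.max p q)%nat ->
      (nth (S k) w 0%nat < nth k w 0%nat)%nat.

Definition leftOf (w : list nat) (a b : nat) : Prop :=
  exists p q, (p < q < length w)%nat /\ nth p w 0%nat = a /\ nth q w 0%nat = b.

Definition Ccone (n : nat) (w : list nat) : (nat -> R) -> Prop :=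
  fun x => inV n x /\
    (forall i j, (i < n)%nat -> (j < n)%nat -> sameBlock w i j -> x i = x j) /\
    (forall i k j, (i < k < j)%nat -> (j < n)%nat ->
       sameBlock w i j -> ~ sameBlock w k i ->
       (leftOf w k i -> x k <= x i) /\ (leftOf w i k -> x i <= x k)).

(* A rank two subarrangement of type A either consists of two hyperplanes with disjoint
   index pairs, both basic, or of H_{a,b}, H_{b,c}, H_{a,c} with a < b < c, where
   B' = {x_a < x_b < x_c} makes H_{a,b} and H_{b,c} basic and H_{a,c} not. So H_{i,j} is
   cut exactly by the H_{i,k} and H_{k,j} with i < k < j, and the shard of H_{i,j} through
   p is the cone x_i = x_j, x_k <= x_i or x_i <= x_k (i < k < j) according to the side of
   p. An intersection of shards is thus cut out by inequalities x_a <= x_b. The classes of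
   the preorder they generate are intervals up to comparability, and writing the classes,
   each in decreasing order, along a linear extension that always continues with the
   minimal class of smallest letter yields a w whose blocks are exactly the classes; then
   the intersection is C(w). Conversely C(w) is the intersection, over i < j in a common
   block, of the shards of H_{i,j} through a point putting the letters left of i below
   x_i and the others above. *)

From Stdlib Require Import Reals List.
From Stdlib Require Import Lra Lia Permutation Sorted Relations ClassicalEpsilon
  FunctionalExtensionality Ranalysis5.
Import ListNotations.
Open Scope R_scope.

Lemma fold_right_Rplus_init (l : list R) (a : R) :
  fold_right Rplus a l = fold_right Rplus 0 l + a.
Proof. induction l as [|y l IH]; simpl; [lra|rewrite IH; lra]. Qed.

Lemma sumR_S (n : nat) (f : nat -> R) : sumR (S n) f = sumR n f + f n.
Proof.
  unfold sumR. rewrite seq_S, map_app, fold_right_app. simpl.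
  rewrite fold_right_Rplus_init. lra.
Qed.

Lemma sumR_ext (n : nat) (f g : nat -> R) :
  (forall i, (i < n)%nat -> f i = g i) -> sumR n f = sumR n g.
Proof.
  induction n as [|n IH]; intros Hfg; [reflexivity|]. rewrite !sumR_S.
  rewrite IH by (intros; apply Hfg; lia). rewrite (Hfg n) by lia. reflexivity.
Qed.

Lemma sumR_lin (n : nat) (a b : R) (f g : nat -> R) :
  sumR n (fun i => a * f i + b * g i) = a * sumR n f + b * sumR n g.
Proof. induction n as [|n IH]; [cbn; lra|]. rewrite !sumR_S, IH. lra. Qed.

Lemma sumR_add (n : nat) (f g : nat -> R) :
  sumR n (fun i => f i + g i) = sumR n f + sumR n g.
Proof. induction n as [|n IH]; [cbn; lra|]. rewrite !sumR_S, IH. lra. Qed.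

Lemma sumR_const (n : nat) (c : R) : sumR n (fun _ => c) = INR n * c.
Proof. induction n as [|n IH]; [cbn; lra|]. rewrite sumR_S, IH, S_INR. lra. Qed.

Lemma sumR_ge0 (n : nat) (f : nat -> R) : (forall i, 0 <= f i) -> 0 <= sumR n f.
Proof.
  intros Hf. induction n as [|n IH]; [cbn; lra|]. rewrite sumR_S. specialize (Hf n). lra.
Qed.

Lemma sumR_ge_term (n : nat) (f : nat -> R) (i : nat) :
  (forall i, 0 <= f i) -> (i < n)%nat -> f i <= sumR n f.
Proof.
  intros Hf Hi. induction n as [|n IH]; [lia|]. rewrite sumR_S.
  destruct (Nat.eq_dec i n) as [->|Hne].
  - pose proof (sumR_ge0 n f Hf). lra.
  - specialize (IH ltac:(lia)). specialize (Hf n). lra.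
Qed.

Definition single (a : nat) (v : R) : nat -> R := fun i => if Nat.eqb i a then v else 0.

Ltac single_simpl :=
  cbv beta; unfold single; cbv beta;
  repeat match goal with |- context [Nat.eqb ?x ?y] => destruct (Nat.eqb_spec x y) end;
  try lia; try (intros; lra).

Lemma sumR_single (n a : nat) (v : R) : (a < n)%nat -> sumR n (single a v) = v.
Proof.
  intros Ha. induction n as [|n IH]; [lia|]. rewrite sumR_S.
  destruct (Nat.eq_dec a n) as [->|Hne].
  - rewrite (sumR_ext n _ (fun _ => 0)), sumR_const by (intros; single_simpl).
    single_simpl.
  - rewrite IH by lia. single_simpl.
Qed.

Definition convex_comb (t : R) (x y : nat -> R) : nat -> R :=
  fun i => (1 - t) * x i + t * y i.

Lemma inV_convex_comb (n : nat) (t : R) (x y : nat -> R) :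
  inV n x -> inV n y -> inV n (convex_comb t x y).
Proof.
  intros [Hx0 Hxs] [Hy0 Hys]. split.
  - intros i Hi. unfold convex_comb. rewrite Hx0, Hy0 by auto. ring.
  - unfold convex_comb. rewrite sumR_lin, Hxs, Hys. ring.
Qed.

Lemma inV_add (n : nat) (x y : nat -> R) :
  inV n x -> inV n y -> inV n (fun i => x i + y i).
Proof.
  intros [Hx0 Hxs] [Hy0 Hys]. split.
  - intros i Hi. rewrite Hx0, Hy0 by auto. ring.
  - rewrite sumR_add, Hxs, Hys. ring.
Qed.

Lemma inV_single3 (n a b c : nat) (va vb vc : R) :
  (a < n)%nat -> (b < n)%nat -> (c < n)%nat -> va + vb + vc = 0 ->
  inV n (fun i => single a va i + single b vb i + single c vc i).
Proof.
  intros Ha Hb Hc Hv. split.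
  - intros i Hi. single_simpl.
  - rewrite !sumR_add, !sumR_single by auto. exact Hv.
Qed.

Definition center (n : nat) (f : nat -> R) : nat -> R :=
  fun i => if Nat.ltb i n then f i - sumR n f / INR n else 0.

Lemma center_inV (n : nat) (f : nat -> R) : (0 < n)%nat -> inV n (center n f).
Proof.
  intros Hn. split.
  - intros i Hi. unfold center. destruct (Nat.ltb_spec i n); [lia|reflexivity].
  - rewrite (sumR_ext n _ (fun i => 1 * f i + (- (sumR n f / INR n)) * 1)).
    + rewrite sumR_lin, sumR_const. field. apply not_0_INR. lia.
    + intros i Hi. unfold center. destruct (Nat.ltb_spec i n); [ring|lia].
Qed.

Lemma center_sub (n : nat) (f : nat -> R) (i j : nat) :
  (i < n)%nat -> (j < n)%nat -> center n f i - center n f j = f i - f j.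
Proof.
  intros Hi Hj. unfold center.
  destruct (Nat.ltb_spec i n), (Nat.ltb_spec j n); try lia. ring.
Qed.

Lemma center_eq (n : nat) (f : nat -> R) (i j : nat) :
  (i < n)%nat -> (j < n)%nat -> center n f i = center n f j <-> f i = f j.
Proof. intros Hi Hj. pose proof (center_sub n f i j Hi Hj). split; intros; lra. Qed.

Lemma center_lt (n : nat) (f : nat -> R) (i j : nat) :
  (i < n)%nat -> (j < n)%nat -> center n f i < center n f j <-> f i < f j.
Proof. intros Hi Hj. pose proof (center_sub n f i j Hi Hj). split; intros; lra. Qed.

Lemma inB_center_INR (n : nat) : (0 < n)%nat -> inB n (center n INR).
Proof.
  intros Hn. split; [apply center_inV; auto|]. intros i j Hij.
  apply center_lt; try lia. apply lt_INR. lia.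
Qed.

(** * Components and closures of open polyhedral cones *)

Lemma path_in_segment (n : nat) (S : (nat -> R) -> Prop) (x y : nat -> R) :
  (forall t, 0 <= t <= 1 -> S (convex_comb t x y)) -> path_in n S x y.
Proof.
  intros HS. exists (fun t => convex_comb t x y). repeat split.
  - apply functional_extensionality. intros i. unfold convex_comb. ring.
  - apply functional_extensionality. intros i. unfold convex_comb. ring.
  - exact HS.
  - intros i _ t _. unfold convex_comb. reg.
Qed.

(** Intermediate value theorem for [x a - x b] along the path. *)
Lemma path_in_preserves_lt (n : nat) (S : (nat -> R) -> Prop) (x y : nat -> R) (a b : nat) :
  path_in n S x y -> (forall z, S z -> z a <> z b) -> (a < n)%nat -> (b < n)%nat ->
  x a < x b -> y a < y b.
Proof.
  intros [g [Hg0 [Hg1 [HgS Hgc]]]] HS Ha Hb Hxab.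
  destruct (Rlt_dec (y a) (y b)) as [|Hnlt]; auto. exfalso.
  assert (Hne : y a <> y b) by (rewrite <- Hg1; apply HS, HgS; lra).
  destruct (IVT_interv (fun s => g s a - g s b) 0 1) as [z [Hz Hz0]].
  - intros t Ht. apply continuity_pt_minus; auto.
  - lra.
  - cbv beta. rewrite Hg0. lra.
  - cbv beta. rewrite Hg1. lra.
  - apply (HS (g z)); [apply HgS; lra|lra].
Qed.

Lemma closure_le_coord (n : nat) (P : (nat -> R) -> Prop) (x : nat -> R) (a b : nat) :
  closure n P x -> (forall y, P y -> y a <= y b) -> (a < n)%nat -> (b < n)%nat ->
  x a <= x b.
Proof.
  intros [_ Hcl] HP Ha Hb.
  destruct (Rle_dec (x a) (x b)) as [|Hgt]; auto.
  destruct (Hcl ((x a - x b) / 2)) as [y [Py Hy]]; [lra|].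
  pose proof (HP y Py). pose proof (Rabs_def2 _ _ (Hy a Ha)). pose proof (Rabs_def2 _ _ (Hy b Hb)).
  lra.
Qed.

Lemma closure_of_segment (n : nat) (P : (nat -> R) -> Prop) (x p : nat -> R) :
  inV n x -> (forall s, 0 < s <= 1 -> P (convex_comb s x p)) -> closure n P x.
Proof.
  intros Hx HP. split; auto. intros eps Heps.
  set (M := 1 + sumR n (fun i => Rabs (p i - x i))).
  assert (Habs : forall i, 0 <= Rabs (p i - x i)) by (intros; apply Rabs_pos).
  assert (HM : 1 <= M) by (pose proof (sumR_ge0 n _ Habs); unfold M; lra).
  set (s := Rmin 1 (eps / (2 * M))).
  assert (Hs0 : 0 < s) by (apply Rmin_glb_lt; [lra|apply Rdiv_lt_0_compat; lra]).
  assert (Hs1 : s <= 1) by apply Rmin_l.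
  assert (Hs2 : s <= eps / (2 * M)) by apply Rmin_r.
  exists (convex_comb s x p). split; [apply HP; lra|].
  intros i Hi. unfold convex_comb.
  replace (x i - ((1 - s) * x i + s * p i)) with (- (s * (p i - x i))) by ring.
  rewrite Rabs_Ropp, Rabs_mult, (Rabs_right s) by lra.
  assert (Hpi : Rabs (p i - x i) < M)
    by (pose proof (sumR_ge_term n _ i Habs Hi); unfold M; lra).
  assert (s * Rabs (p i - x i) <= eps / (2 * M) * M)
    by (apply Rmult_le_compat; auto; lra).
  replace (eps / (2 * M) * M) with (eps / 2) in * by (field; lra). lra.
Qed.

Lemma closure_ext (n : nat) (P Q : (nat -> R) -> Prop) :
  (forall x, P x <-> Q x) -> forall x, closure n P x <-> closure n Q x.
Proof.
  intros HPQ x. unfold closure.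
  split; intros [Hx Hcl]; split; auto; intros eps Heps;
    destruct (Hcl eps Heps) as [y [Hy Hxy]]; exists y; split; auto; apply HPQ; auto.
Qed.

Lemma hasFacetIn_ext (n : nat) (C D : (nat -> R) -> Prop) (K : hyp) :
  (forall x, C x <-> D x) -> hasFacetIn n C K <-> hasFacetIn n D K.
Proof.
  intros HCD. unfold hasFacetIn.
  split; intros [p [Hp [HpK [HpC [eps [Heps Hball]]]]]]; exists p;
    (split; [auto|split; [auto|split; [apply HCD; auto|]]]);
    exists eps; split; auto; intros; apply HCD; auto.
Qed.

Definition open_cone (n : nat) (Lt Eq : nat -> nat -> Prop) (x : nat -> R) : Prop :=
  inV n x /\ (forall a b, Lt a b -> x a < x b) /\ (forall a b, Eq a b -> x a = x b).

Definition closed_cone (n : nat) (Lt Eq : nat -> nat -> Prop) (x : nat -> R) : Prop :=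
  inV n x /\ (forall a b, Lt a b -> x a <= x b) /\ (forall a b, Eq a b -> x a = x b).

Lemma open_cone_convex (n : nat) (Lt Eq : nat -> nat -> Prop) (x y : nat -> R) (t : R) :
  open_cone n Lt Eq x -> open_cone n Lt Eq y -> 0 <= t <= 1 ->
  open_cone n Lt Eq (convex_comb t x y).
Proof.
  intros [Hx [HxL HxE]] [Hy [HyL HyE]] Ht. split; [apply inV_convex_comb; auto|split].
  - intros a b Hab. specialize (HxL a b Hab). specialize (HyL a b Hab). unfold convex_comb.
    destruct (Rle_lt_dec t 0).
    + assert (0 < (1 - t) * (x b - x a)) by (apply Rmult_lt_0_compat; lra).
      assert (0 <= t * (y b - y a)) by (apply Rmult_le_pos; lra). lra.
    + assert (0 <= (1 - t) * (x b - x a)) by (apply Rmult_le_pos; lra).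
      assert (0 < t * (y b - y a)) by (apply Rmult_lt_0_compat; lra). lra.
  - intros a b Hab. unfold convex_comb. rewrite (HxE a b Hab), (HyE a b Hab). reflexivity.
Qed.

Lemma convex_comb_closed_open (n : nat) (Lt Eq : nat -> nat -> Prop) (x p : nat -> R) (s : R) :
  closed_cone n Lt Eq x -> open_cone n Lt Eq p -> 0 < s <= 1 ->
  open_cone n Lt Eq (convex_comb s x p).
Proof.
  intros [Hx [HxL HxE]] [Hp [HpL HpE]] Hs. split; [apply inV_convex_comb; auto|split].
  - intros a b Hab. specialize (HxL a b Hab). specialize (HpL a b Hab). unfold convex_comb.
    assert (0 <= (1 - s) * (x b - x a)) by (apply Rmult_le_pos; lra).
    assert (0 < s * (p b - p a)) by (apply Rmult_lt_0_compat; lra). lra.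
  - intros a b Hab. unfold convex_comb. rewrite (HxE a b Hab), (HpE a b Hab). reflexivity.
Qed.

Section OpenConeComponent.

Variables (n : nat) (Lt Eq : nat -> nat -> Prop) (S : (nat -> R) -> Prop).

Hypothesis open_cone_sub : forall x, open_cone n Lt Eq x -> S x.
Hypothesis sub_walls : forall x, S x ->
  inV n x /\ (forall a b, Lt a b -> x a <> x b) /\ (forall a b, Eq a b -> x a = x b).
Hypothesis Lt_bounded : forall a b, Lt a b -> (a < n)%nat /\ (b < n)%nat.
Hypothesis Eq_bounded : forall a b, Eq a b -> (a < n)%nat /\ (b < n)%nat.

Lemma component_open_cone (p : nat -> R) :
  open_cone n Lt Eq p -> forall y, component n S p y <-> open_cone n Lt Eq y.
Proof.
  intros Hp y. split.
  - intros [Sy Hpath]. destruct (sub_walls y Sy) as [Hy [_ HyE]]. split; [auto|split; [|auto]].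
    intros a b Hab. destruct (Lt_bounded a b Hab).
    apply (path_in_preserves_lt n S p y a b Hpath); auto.
    + intros z Sz. apply (sub_walls z Sz); auto.
    + apply Hp; auto.
  - intros Hy. split; [auto|]. apply path_in_segment. intros t Ht.
    apply open_cone_sub, open_cone_convex; auto.
Qed.

Lemma closure_component_open_cone (p : nat -> R) :
  open_cone n Lt Eq p -> forall x, closure n (component n S p) x <-> closed_cone n Lt Eq x.
Proof.
  intros Hp x. pose proof (component_open_cone p Hp) as Hcomp. split.
  - intros Hcl. split; [apply Hcl|split].
    + intros a b Hab. destruct (Lt_bounded a b Hab).
      apply (closure_le_coord n _ x a b Hcl); auto.
      intros y Hy. apply Hcomp in Hy. left. apply Hy; auto.
    + intros a b Hab. destruct (Eq_bounded a b Hab).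
      apply Rle_antisym; apply (closure_le_coord n _ x _ _ Hcl); auto;
        intros y Hy; apply Hcomp in Hy; right; [|symmetry]; apply Hy; auto.
  - intros Hx. apply (closure_of_segment n _ x p); [apply Hx|].
    intros s Hs. apply Hcomp, convex_comb_closed_open; auto.
Qed.

End OpenConeComponent.

(** * Rank two subarrangements and cutting *)

Definition in_triple (a b c : nat) (K : hyp) : Prop := K = (a,b) \/ K = (b,c) \/ K = (a,c).

Definition disjointH (H1 H2 : hyp) : Prop :=
  fst H1 <> fst H2 /\ fst H1 <> snd H2 /\ snd H1 <> fst H2 /\ snd H1 <> snd H2.

Lemma hyp_pair_cases (n : nat) (H1 H2 : hyp) : validH n H1 -> validH n H2 -> H1 <> H2 ->
  disjointH H1 H2 \/
  exists a b c, (a < b < c)%nat /\ (c < n)%nat /\ in_triple a b c H1 /\ in_triple a b c H2.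
Proof.
  destruct H1 as [u v], H2 as [s t]. unfold validH, disjointH, in_triple. simpl.
  intros Huv Hst Hne.
  destruct (Nat.eq_dec u s); [|destruct (Nat.eq_dec u t);
    [|destruct (Nat.eq_dec v s); [|destruct (Nat.eq_dec v t)]]]; subst.
  - right. destruct (Nat.lt_total v t) as [Hl|[->|Hl]]; [|congruence|].
    + exists s, v, t. repeat split; auto; lia.
    + exists s, t, v. repeat split; auto; lia.
  - right. exists s, t, v. repeat split; auto; lia.
  - right. exists u, s, t. repeat split; auto; lia.
  - right. destruct (Nat.lt_total u s) as [Hl|[->|Hl]]; [|congruence|].
    + exists u, s, t. repeat split; auto; lia.
    + exists s, u, t. repeat split; auto; lia.
  - left. repeat split; auto.
Qed.

Definition level_point (A B : nat -> bool) : nat -> R :=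
  fun i => if A i then 0 else if B i then -1 else INR (S i).

Lemma level_point_eq (A B : nat -> bool) (u v : nat) :
  level_point A B u = level_point A B v ->
  u = v \/ (A u = true /\ A v = true) \/
  (A u = false /\ A v = false /\ B u = true /\ B v = true).
Proof.
  unfold level_point. pose proof (pos_INR u). pose proof (pos_INR v). rewrite !S_INR.
  destruct (A u), (A v), (B u), (B v); intros E; auto; try lra.
  left. apply INR_eq. lra.
Qed.

Lemma inA2_triple (n a b c : nat) (H1 H2 : hyp) : (a < b < c)%nat -> (c < n)%nat ->
  in_triple a b c H1 -> in_triple a b c H2 -> H1 <> H2 ->
  forall K, inA2 n H1 H2 K <-> in_triple a b c K.
Proof.
  intros Habc Hc HT1 HT2 Hne K. split.
  - destruct K as [u v]. intros [HK Hall]. unfold validH in HK; simpl in HK.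
    set (A i := (Nat.eqb i a || Nat.eqb i b || Nat.eqb i c)%bool).
    set (x := center n (level_point A (fun _ => false))).
    assert (HonT : forall K, in_triple a b c K -> onH K x).
    { intros K' HK'. unfold onH, x. apply center_eq; try (destruct HK' as [->|[->| ->]]; simpl; lia).
      unfold level_point, A. destruct HK' as [->|[->| ->]]; simpl;
        rewrite !Nat.eqb_refl, ?Bool.orb_true_r; reflexivity. }
    specialize (Hall x (center_inV n _ ltac:(lia)) (HonT _ HT1) (HonT _ HT2)).
    unfold onH, x in Hall; simpl in Hall. apply center_eq in Hall; try lia.
    destruct (level_point_eq _ _ _ _ Hall) as [E|[[Au Av]|[_ [_ [E _]]]]]; [lia| |discriminate].
    unfold A in Au, Av. unfold in_triple.
    repeat rewrite Bool.orb_true_iff, ?Nat.eqb_eq in Au, Av.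
    destruct Au as [[->| ->]| ->], Av as [[->| ->]| ->]; auto; lia.
  - intros HK. split.
    + unfold validH. destruct HK as [->|[->| ->]]; simpl; lia.
    + intros x _ Hx1 Hx2. unfold in_triple, onH in *.
      destruct HT1 as [->|[->| ->]], HT2 as [->|[->| ->]], HK as [->|[->| ->]];
        simpl in *; congruence.
Qed.

Lemma inA2_disjoint (n : nat) (H1 H2 : hyp) : validH n H1 -> validH n H2 -> disjointH H1 H2 ->
  forall K, inA2 n H1 H2 K <-> K = H1 \/ K = H2.
Proof.
  destruct H1 as [a b], H2 as [c d]. unfold validH, disjointH. simpl.
  intros Hab Hcd Hdisj K. split.
  - destruct K as [u v]. intros [HK Hall]. unfold validH in HK; simpl in HK.
    set (A i := (Nat.eqb i a || Nat.eqb i b)%bool).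
    set (B i := (Nat.eqb i c || Nat.eqb i d)%bool).
    set (x := center n (level_point A B)).
    assert (Hab' : onH (a,b) x).
    { unfold onH, x; simpl. apply center_eq; try lia.
      unfold level_point, A. rewrite !Nat.eqb_refl, ?Bool.orb_true_r. reflexivity. }
    assert (Hcd' : onH (c,d) x).
    { unfold onH, x; simpl. apply center_eq; try lia.
      unfold level_point, A, B. rewrite !Nat.eqb_refl, ?Bool.orb_true_r.
      repeat match goal with |- context [Nat.eqb ?x ?y] => destruct (Nat.eqb_spec x y) end;
        simpl; lia || reflexivity. }
    specialize (Hall x (center_inV n _ ltac:(lia)) Hab' Hcd').
    unfold onH, x in Hall; simpl in Hall. apply center_eq in Hall; try lia.
    unfold A, B in Hall.
    destruct (level_point_eq _ _ _ _ Hall) as [E|[[Au Av]|[_ [_ [Bu Bv]]]]]; [lia| |];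
      repeat rewrite Bool.orb_true_iff, ?Nat.eqb_eq in *.
    + left. destruct Au as [->| ->], Av as [->| ->]; auto; lia.
    + right. destruct Bu as [->| ->], Bv as [->| ->]; auto; lia.
  - intros HK. split.
    + unfold validH. destruct HK as [->| ->]; simpl; lia.
    + intros x _ Hx1 Hx2. destruct HK as [->| ->]; auto.
Qed.

Definition two_lt (u1 v1 u2 v2 : nat) : nat -> nat -> Prop :=
  fun a b => (a = u1 /\ b = v1) \/ (a = u2 /\ b = v2).
Definition no_eq : nat -> nat -> Prop := fun _ _ => False.

Lemma closure_Bprime (n : nat) (H1 H2 : hyp) (u1 v1 u2 v2 : nat) (Ks : hyp -> Prop) :
  (u1 < v1 < n)%nat -> (u2 < v2 < n)%nat ->
  (forall K, inA2 n H1 H2 K <-> Ks K) -> Ks (u1,v1) -> Ks (u2,v2) ->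
  (forall x, open_cone n (two_lt u1 v1 u2 v2) no_eq x -> forall K, Ks K -> ~ onH K x) ->
  forall x, closure n (Bprime n H1 H2) x <-> closed_cone n (two_lt u1 v1 u2 v2) no_eq x.
Proof.
  intros Huv1 Huv2 HKs HK1 HK2 Hoff.
  set (Lt := two_lt u1 v1 u2 v2).
  assert (Hsub : forall x, open_cone n Lt no_eq x -> complA2 n H1 H2 x).
  { intros x Hx. split; [apply Hx|]. intros K HK. apply (Hoff x Hx), HKs, HK. }
  assert (Hwalls : forall x, complA2 n H1 H2 x -> inV n x /\
            (forall a b, Lt a b -> x a <> x b) /\ (forall a b, no_eq a b -> x a = x b)).
  { intros x [Hx Hoff']. split; [exact Hx|split; [|intros a b []]].
    intros a b [[-> ->]|[-> ->]] E;
      [apply (Hoff' (u1,v1))|apply (Hoff' (u2,v2))]; auto; apply HKs; auto. }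
  assert (Hbd : forall a b, Lt a b -> (a < n)%nat /\ (b < n)%nat)
    by (intros a b [[-> ->]|[-> ->]]; lia).
  assert (Hbd' : forall a b, no_eq a b -> (a < n)%nat /\ (b < n)%nat) by (intros a b []).
  assert (HB : forall b, inB n b -> open_cone n Lt no_eq b).
  { intros b [Hb Hlt]. split; [exact Hb|split; [|intros a c []]].
    intros a c [[-> ->]|[-> ->]]; apply Hlt; lia. }
  set (b0 := center n INR).
  assert (Hb0 : inB n b0) by (apply inB_center_INR; lia).
  intros x.
  rewrite <- (closure_component_open_cone n Lt no_eq _ Hsub Hwalls Hbd Hbd' b0 (HB b0 Hb0) x).
  apply closure_ext. intros y. split.
  - intros [b [Hb Hy]]. apply (component_open_cone n Lt no_eq _ Hsub Hwalls Hbd b0 (HB b0 Hb0)).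
    apply (component_open_cone n Lt no_eq _ Hsub Hwalls Hbd b (HB b Hb)). exact Hy.
  - intros Hy. exists b0. split; auto.
Qed.

Lemma hasFacetIn_closed_cone (n : nat) (Lt : nat -> nat -> Prop) (u v : nat) (p : nat -> R) :
  inV n p -> p u = p v ->
  (forall a b, Lt a b -> (a < n)%nat /\ (b < n)%nat) ->
  (forall a b, Lt a b -> (a = u /\ b = v) \/ p a + 1 <= p b - 1) ->
  hasFacetIn n (closed_cone n Lt no_eq) (u,v).
Proof.
  intros Hp Huv Hbd Hslack. exists p. split; [auto|split; [exact Huv|split]].
  - split; [auto|split; [|intros a b []]].
    intros a b Hab. destruct (Hslack a b Hab) as [[-> ->]|]; lra.
  - exists 1. split; [lra|]. intros q Hq Hqon Hqp. split; [auto|split; [|intros a b []]].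
    intros a b Hab. unfold onH in Hqon; simpl in Hqon.
    destruct (Hslack a b Hab) as [[-> ->]|Hs]; [lra|]. destruct (Hbd a b Hab).
    pose proof (Rabs_def2 _ _ (Hqp a ltac:(auto))). pose proof (Rabs_def2 _ _ (Hqp b ltac:(auto))).
    lra.
Qed.

Lemma hasFacetIn_triple_ab (n a b c : nat) : (a < b < c)%nat -> (c < n)%nat ->
  hasFacetIn n (closed_cone n (two_lt a b b c) no_eq) (a,b).
Proof.
  intros Habc Hc.
  apply (hasFacetIn_closed_cone n _ a b (fun i => single a (-1) i + single b (-1) i + single c 2 i)).
  - apply inV_single3; lia || lra.
  - single_simpl.
  - intros x y [[-> ->]|[-> ->]]; lia.
  - intros x y [[-> ->]|[-> ->]]; [left; auto|right; single_simpl].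
Qed.

Lemma hasFacetIn_triple_bc (n a b c : nat) : (a < b < c)%nat -> (c < n)%nat ->
  hasFacetIn n (closed_cone n (two_lt a b b c) no_eq) (b,c).
Proof.
  intros Habc Hc.
  apply (hasFacetIn_closed_cone n _ b c (fun i => single a (-2) i + single b 1 i + single c 1 i)).
  - apply inV_single3; lia || lra.
  - single_simpl.
  - intros x y [[-> ->]|[-> ->]]; lia.
  - intros x y [[-> ->]|[-> ->]]; [right; single_simpl|left; auto].
Qed.

(** Near a point of the cone on [x a = x c], lowering [x a = x c] and raising [x b]
    stays on the hyperplane but breaks [x b <= x c]. *)
Lemma not_hasFacetIn_triple_ac (n a b c : nat) : (a < b < c)%nat -> (c < n)%nat ->
  ~ hasFacetIn n (closed_cone n (two_lt a b b c) no_eq) (a,c).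
Proof.
  intros Habc Hc [p [Hp [Hpac [[_ [Hplt _]] [eps [Heps Hball]]]]]].
  unfold onH in Hpac; simpl in Hpac.
  pose proof (Hplt a b (or_introl (conj eq_refl eq_refl))) as Hpab.
  set (q i := p i + (single a (- (eps / 4)) i + single b (eps / 2) i + single c (- (eps / 4)) i)).
  assert (Hq : inV n q) by (apply inV_add; [auto|apply inV_single3; lia || lra]).
  assert (Hqac : onH (a,c) q) by (unfold onH, q; simpl; single_simpl).
  destruct (Hball q Hq Hqac) as [_ [Hqlt _]].
  - intros i Hi. unfold q. apply Rabs_def1; single_simpl.
  - pose proof (Hqlt b c (or_intror (conj eq_refl eq_refl))) as Hqbc.
    revert Hqbc. unfold q. single_simpl.
Qed.

Lemma hasFacetIn_disjoint_1 (n a b c d : nat) : (a < b < n)%nat -> (c < d < n)%nat ->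
  a <> c -> a <> d -> b <> c -> b <> d ->
  hasFacetIn n (closed_cone n (two_lt a b c d) no_eq) (a,b).
Proof.
  intros Hab Hcd Hac Had Hbc Hbd.
  apply (hasFacetIn_closed_cone n _ a b (fun i => single c (-1) i + single d 1 i + single a 0 i)).
  - apply inV_single3; lia || lra.
  - single_simpl.
  - intros x y [[-> ->]|[-> ->]]; lia.
  - intros x y [[-> ->]|[-> ->]]; [left; auto|right; single_simpl].
Qed.

Lemma hasFacetIn_disjoint_2 (n a b c d : nat) : (a < b < n)%nat -> (c < d < n)%nat ->
  a <> c -> a <> d -> b <> c -> b <> d ->
  hasFacetIn n (closed_cone n (two_lt a b c d) no_eq) (c,d).
Proof.
  intros Hab Hcd Hac Had Hbc Hbd.
  apply (hasFacetIn_closed_cone n _ c d (fun i => single a (-1) i + single b 1 i + single c 0 i)).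
  - apply inV_single3; lia || lra.
  - single_simpl.
  - intros x y [[-> ->]|[-> ->]]; lia.
  - intros x y [[-> ->]|[-> ->]]; [right; single_simpl|left; auto].
Qed.

Lemma basic_triple (n a b c : nat) (H1 H2 : hyp) : (a < b < c)%nat -> (c < n)%nat ->
  in_triple a b c H1 -> in_triple a b c H2 -> H1 <> H2 ->
  basic n H1 H2 (a,b) /\ basic n H1 H2 (b,c) /\ ~ basic n H1 H2 (a,c).
Proof.
  intros Habc Hc HT1 HT2 Hne.
  pose proof (inA2_triple n a b c H1 H2 Habc Hc HT1 HT2 Hne) as HA.
  assert (Hcl : forall x, closure n (Bprime n H1 H2) x <->
                          closed_cone n (two_lt a b b c) no_eq x).
  { apply (closure_Bprime n H1 H2 a b b c (in_triple a b c)); try lia; auto.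
    - left; reflexivity.
    - right; left; reflexivity.
    - intros x [_ [Hlt _]] K HK. unfold onH.
      pose proof (Hlt a b (or_introl (conj eq_refl eq_refl))).
      pose proof (Hlt b c (or_intror (conj eq_refl eq_refl))).
      destruct HK as [->|[->| ->]]; simpl; lra. }
  unfold basic. rewrite !(hasFacetIn_ext n _ _ _ Hcl), !HA. unfold in_triple.
  split; [|split].
  - split; auto. apply hasFacetIn_triple_ab; auto.
  - split; auto. apply hasFacetIn_triple_bc; auto.
  - intros [_ Hf]. apply (not_hasFacetIn_triple_ac n a b c); auto.
Qed.

Lemma basic_disjoint (n : nat) (H1 H2 : hyp) : validH n H1 -> validH n H2 -> disjointH H1 H2 ->
  basic n H1 H2 H1 /\ basic n H1 H2 H2.
Proof.
  intros Hv1 Hv2 Hdisj.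
  pose proof (inA2_disjoint n H1 H2 Hv1 Hv2 Hdisj) as HA.
  destruct H1 as [a b], H2 as [c d]. unfold validH, disjointH in *; simpl in *.
  assert (Hcl : forall x, closure n (Bprime n (a,b) (c,d)) x <->
                          closed_cone n (two_lt a b c d) no_eq x).
  { apply (closure_Bprime n _ _ a b c d (fun K => K = (a,b) \/ K = (c,d))); try lia; auto.
    intros x [_ [Hlt _]] K HK. unfold onH.
    pose proof (Hlt a b (or_introl (conj eq_refl eq_refl))).
    pose proof (Hlt c d (or_intror (conj eq_refl eq_refl))).
    destruct HK as [->| ->]; simpl; lra. }
  unfold basic. rewrite !(hasFacetIn_ext n _ _ _ Hcl), !HA. split.
  - split; auto. apply hasFacetIn_disjoint_1; tauto.
  - split; auto. apply hasFacetIn_disjoint_2; tauto.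
Qed.

Lemma cuts_inv (n : nat) (K H : hyp) : validH n H -> cuts n K H ->
  exists k, (fst H < k < snd H)%nat /\ (K = (fst H, k) \/ K = (k, snd H)).
Proof.
  intros HvH [H1 [H2 [Hv1 [Hv2 [Hne [HinH [HnbH HbK]]]]]]].
  destruct (hyp_pair_cases n H1 H2 Hv1 Hv2 Hne) as [Hdisj|[a [b [c [Habc [Hc [HT1 HT2]]]]]]].
  - destruct (basic_disjoint n H1 H2 Hv1 Hv2 Hdisj) as [B1 B2].
    apply (inA2_disjoint n H1 H2 Hv1 Hv2 Hdisj) in HinH.
    destruct HinH as [->| ->]; contradiction.
  - pose proof (inA2_triple n a b c H1 H2 Habc Hc HT1 HT2 Hne) as HA.
    destruct (basic_triple n a b c H1 H2 Habc Hc HT1 HT2 Hne) as [Bab [Bbc Nac]].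
    apply HA in HinH. pose proof (proj1 HbK) as HK. apply HA in HK.
    destruct HinH as [->|[->| ->]]; try contradiction.
    exists b. simpl. split; [lia|]. destruct HK as [->|[->| ->]]; auto. contradiction.
Qed.

Lemma cuts_triple (n i k j : nat) : (i < k < j)%nat -> (j < n)%nat -> cuts n (i,k) (i,j).
Proof.
  intros Hikj Hj.
  assert (HT1 : in_triple i k j (i,k)) by (left; reflexivity).
  assert (HT2 : in_triple i k j (k,j)) by (right; left; reflexivity).
  assert (Hne : (i,k) <> (k,j)) by (intros E; inversion E; lia).
  destruct (basic_triple n i k j _ _ Hikj Hj HT1 HT2 Hne) as [Bik [_ Nij]].
  exists (i,k), (k,j). unfold validH; simpl.
  split; [lia|split; [lia|split; [exact Hne|split; [|split; [exact Nij|exact Bik]]]]].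
  apply (inA2_triple n i k j _ _ Hikj Hj HT1 HT2 Hne). right; right; reflexivity.
Qed.

(** * Shards *)

Lemma shardDomain_iff (n i j : nat) (x : nat -> R) : validH n (i,j) ->
  shardDomain n (i,j) x <-> inV n x /\ x i = x j /\ forall k, (i < k < j)%nat -> x k <> x i.
Proof.
  intros Hv. unfold validH in Hv; simpl in Hv. split.
  - intros [Hx [Hon Hcut]]. split; [auto|split; [auto|]]. intros k Hk E.
    apply (Hcut (i,k)); [unfold validH; simpl; lia|apply cuts_triple; lia|unfold onH; simpl; auto].
  - intros [Hx [Hon Hk]]. split; [auto|split; [auto|]]. intros K HK Hcut HKx.
    destruct (cuts_inv n K (i,j) ltac:(unfold validH; simpl; lia) Hcut)
      as [k [Hk' [->| ->]]]; unfold onH in *; simpl in *; apply (Hk k Hk'); congruence.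
Qed.

Definition shard_lt (i j : nat) (p : nat -> R) (a b : nat) : Prop :=
  ((i < a < j)%nat /\ p a < p i /\ b = i) \/ ((i < b < j)%nat /\ p i < p b /\ a = i).

Definition shard_eq (i j : nat) (a b : nat) : Prop := a = i /\ b = j.

Section ShardCone.

Variables (n i j : nat) (p : nat -> R).
Hypothesis Hij : validH n (i,j).
Hypothesis Hp : shardDomain n (i,j) p.

Lemma open_cone_shardDomain (x : nat -> R) :
  open_cone n (shard_lt i j p) (shard_eq i j) x -> shardDomain n (i,j) x.
Proof.
  intros [Hx [Hlt Heq]]. apply shardDomain_iff; auto.
  split; [auto|split; [apply Heq; split; auto|]]. intros k Hk.
  apply shardDomain_iff in Hp; auto. destruct Hp as [_ [_ Hpk]]. specialize (Hpk k Hk).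
  destruct (Rtotal_order (p k) (p i)) as [Hki|[Hki|Hki]]; [|contradiction|].
  - assert (x k < x i) by (apply Hlt; left; auto). lra.
  - assert (x i < x k) by (apply Hlt; right; auto). lra.
Qed.

Lemma shardDomain_walls (x : nat -> R) : shardDomain n (i,j) x ->
  inV n x /\ (forall a b, shard_lt i j p a b -> x a <> x b) /\
  (forall a b, shard_eq i j a b -> x a = x b).
Proof.
  intros Hx. apply shardDomain_iff in Hx; auto. destruct Hx as [Hx [Hxij Hxk]].
  split; [auto|split].
  - intros a b [[Ha [_ ->]]|[Hb [_ ->]]]; [apply Hxk; auto|]. intros E. apply (Hxk b Hb). auto.
  - intros a b [-> ->]. auto.
Qed.

Lemma shard_iff (x : nat -> R) :
  shard n (i,j) p x <-> inV n x /\ x i = x j /\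
    forall k, (i < k < j)%nat -> (p k < p i -> x k <= x i) /\ (p i < p k -> x i <= x k).
Proof.
  pose proof Hij as Hv. unfold validH in Hv; simpl in Hv.
  assert (Hpc : open_cone n (shard_lt i j p) (shard_eq i j) p).
  { destruct (shardDomain_walls p Hp) as [Hp1 [_ Hp3]].
    split; [auto|split; [|auto]]. intros a b [[_ [Hlt ->]]|[_ [Hlt ->]]]; auto. }
  unfold shard.
  rewrite (closure_component_open_cone n _ _ _ open_cone_shardDomain shardDomain_walls
             ltac:(intros a b [[? [_ ->]]|[? [_ ->]]]; lia)
             ltac:(intros a b [-> ->]; lia) p Hpc x).
  split.
  - intros [Hx [Hlt Heq]]. split; [auto|split; [apply Heq; split; auto|]].
    intros k Hk. split; intros; apply Hlt; [left|right]; auto.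
  - intros [Hx [Hxij Hxk]]. split; [auto|split].
    + intros a b [[Ha [Hlt ->]]|[Hb [Hlt ->]]]; apply (Hxk _ ltac:(eassumption)); auto.
    + intros a b [-> ->]. auto.
Qed.

End ShardCone.

(** * Blocks and positions in a word *)

Open Scope nat_scope.

Lemma sameBlock_sym (w : list nat) (a b : nat) : sameBlock w a b -> sameBlock w b a.
Proof.
  intros [p [q [Hp [Hq [Ha [Hb Hdesc]]]]]]. exists q, p. repeat split; auto.
  intros k Hk. apply Hdesc. lia.
Qed.

Lemma sameBlock_In (w : list nat) (a b : nat) : sameBlock w a b -> In a w /\ In b w.
Proof. intros [p [q [Hp [Hq [<- [<- _]]]]]]. split; apply nth_In; auto. Qed.

Lemma leftOf_asym (w : list nat) (a b : nat) : NoDup w -> leftOf w a b -> ~ leftOf w b a.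
Proof.
  intros Hnd [p [q [Hpq [Ha Hb]]]] [p' [q' [Hpq' [Hb' Ha']]]].
  rewrite NoDup_nth with (d := 0) in Hnd.
  assert (p = q') by (apply Hnd; try lia; congruence).
  assert (q = p') by (apply Hnd; try lia; congruence). lia.
Qed.

Lemma leftOf_total (w : list nat) (a b : nat) :
  In a w -> In b w -> a <> b -> leftOf w a b \/ leftOf w b a.
Proof.
  intros Ha Hb Hab. destruct (In_nth w a 0 Ha) as [p [Hp Hpa]].
  destruct (In_nth w b 0 Hb) as [q [Hq Hqb]].
  destruct (Nat.lt_total p q) as [H|[->|H]]; [left|congruence|right].
  - exists p, q. auto.
  - exists q, p. auto.
Qed.

Definition decreasing (L : list nat) : Prop :=
  forall k, S k < length L -> nth (S k) L 0 < nth k L 0.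

Lemma nth_app_shift (B w : list nat) (k : nat) : nth (k + length B) (B ++ w) 0 = nth k w 0.
Proof. rewrite app_nth2 by lia. f_equal. lia. Qed.

Lemma sameBlock_app (B w : list nat) : decreasing B ->
  (B <> [] -> w <> [] -> nth (length B - 1) B 0 < nth 0 w 0) ->
  forall a b, sameBlock (B ++ w) a b <-> (In a B /\ In b B) \/ sameBlock w a b.
Proof.
  intros HB Hjoin a b. split.
  - intros [p [q [Hp [Hq [Ha [Hb Hdesc]]]]]]. rewrite length_app in Hp, Hq.
    assert (Hcross : p < length B <= q \/ q < length B <= p -> False).
    { intros Hpq.
      assert (HBne : B <> []) by (intros E; subst; simpl in *; lia).
      assert (Hwne : w <> []) by (intros E; subst; simpl in *; lia).
      specialize (Hdesc (length B - 1) ltac:(lia)). specialize (Hjoin HBne Hwne).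
      rewrite app_nth2, app_nth1 in Hdesc by lia.
      replace (S (length B - 1) - length B) with 0 in Hdesc by lia. lia. }
    destruct (Nat.lt_ge_cases p (length B)), (Nat.lt_ge_cases q (length B)); try (exfalso; lia).
    + left. rewrite app_nth1 in Ha, Hb by auto. subst. split; apply nth_In; auto.
    + right. exists (p - length B), (q - length B).
      rewrite <- (nth_app_shift B w), <- (nth_app_shift B w (q - _)).
      replace (p - length B + length B) with p by lia.
      replace (q - length B + length B) with q by lia.
      repeat split; auto; try lia.
      intros k Hk. rewrite <- !(nth_app_shift B w), plus_Sn_m. apply Hdesc. lia.
  - intros [[Ha Hb]|[p [q [Hp [Hq [Ha [Hb Hdesc]]]]]]].
    + destruct (In_nth B a 0 Ha) as [p [Hp <-]]. destruct (In_nth B b 0 Hb) as [q [Hq <-]].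
      exists p, q. rewrite length_app, !app_nth1 by auto. repeat split; auto; try lia.
      intros k Hk. rewrite !app_nth1 by lia. apply HB. lia.
    + exists (p + length B), (q + length B). rewrite length_app, !nth_app_shift.
      repeat split; auto; try lia.
      intros k Hk. replace k with (k - length B + length B) by lia.
      rewrite <- plus_Sn_m, !nth_app_shift. apply Hdesc. lia.
Qed.

Lemma leftOf_app_l (B w : list nat) (a b : nat) : In a B -> In b w -> leftOf (B ++ w) a b.
Proof.
  intros Ha Hb. destruct (In_nth B a 0 Ha) as [p [Hp <-]].
  destruct (In_nth w b 0 Hb) as [q [Hq <-]].
  exists p, (q + length B). rewrite length_app, app_nth1, nth_app_shift by auto.
  repeat split; auto; lia.
Qed.

Lemma leftOf_app_r (B w : list nat) (a b : nat) : leftOf w a b -> leftOf (B ++ w) a b.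
Proof.
  intros [p [q [Hpq [<- <-]]]]. exists (p + length B), (q + length B).
  rewrite length_app, !nth_app_shift. repeat split; auto; lia.
Qed.

Fixpoint countdown (N : nat) : list nat := match N with 0 => [] | S m => m :: countdown m end.

Lemma countdown_In (N x : nat) : In x (countdown N) <-> x < N.
Proof. induction N; simpl; [split; [tauto|lia]|]. rewrite IHN. lia. Qed.

Lemma countdown_sorted (N : nat) : StronglySorted gt (countdown N).
Proof.
  induction N; simpl; constructor; auto.
  apply Forall_forall. intros x Hx. apply countdown_In in Hx. lia.
Qed.

Lemma countdown_NoDup (N : nat) : NoDup (countdown N).
Proof. induction N; simpl; constructor; auto. rewrite countdown_In. lia. Qed.

Lemma StronglySorted_filter {A : Type} (Rel : A -> A -> Prop) (f : A -> bool) (L : list A) :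
  StronglySorted Rel L -> StronglySorted Rel (filter f L).
Proof.
  induction L as [|x L IH]; intros HL; simpl; auto.
  apply StronglySorted_inv in HL as [HL Hx]. destruct (f x); auto. constructor; auto.
  rewrite Forall_forall in *. intros y Hy. apply filter_In in Hy. apply Hx. tauto.
Qed.

Lemma StronglySorted_decreasing (L : list nat) : StronglySorted gt L -> decreasing L.
Proof.
  induction L as [|x L IH]; intros HL k Hk; simpl in *; [lia|].
  apply StronglySorted_inv in HL as [HL Hx]. destruct k.
  - destruct L; simpl in *; [lia|]. inversion Hx; subst. auto.
  - apply IH; auto. lia.
Qed.

Lemma StronglySorted_head_max (x y : nat) (L : list nat) :
  StronglySorted gt (x :: L) -> In y (x :: L) -> y <= x.
Proof.
  intros HL [<-|Hy]; [lia|]. apply StronglySorted_inv in HL as [_ Hx].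
  rewrite Forall_forall in Hx. specialize (Hx y Hy). lia.
Qed.

Lemma StronglySorted_last_min (L : list nat) (c : nat) :
  StronglySorted gt L -> In c L -> nth (length L - 1) L 0 <= c.
Proof.
  induction L as [|x L IH]; intros HL Hc; [destruct Hc|].
  apply StronglySorted_inv in HL as [HL Hx]. destruct L as [|y L].
  - destruct Hc as [<-|[]]. simpl. lia.
  - replace (length (x :: y :: L) - 1) with (S (length (y :: L) - 1)) by (simpl; lia).
    change (nth (S ?k) (x :: ?l) 0) with (nth k l 0). destruct Hc as [<-|Hc]; [|apply IH; auto].
    rewrite Forall_forall in Hx.
    assert (Hlast : In (nth (length (y :: L) - 1) (y :: L) 0) (y :: L)) by (apply nth_In; simpl; lia).
    specialize (Hx _ Hlast). lia.
Qed.

(** * Words realizing a preorder *)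

Definition decP (P : Prop) : bool := if excluded_middle_informative P then true else false.

Lemma decP_true (P : Prop) : decP P = true <-> P.
Proof. unfold decP. destruct (excluded_middle_informative P); split; auto; congruence. Qed.

Lemma decP_false (P : Prop) : decP P = false <-> ~ P.
Proof. unfold decP. destruct (excluded_middle_informative P); split; auto; congruence. Qed.

Lemma least_nat (P : nat -> Prop) (m : nat) : P m -> exists c, P c /\ forall c', P c' -> c <= c'.
Proof.
  induction m as [m IH] using (well_founded_induction Wf_nat.lt_wf). intros Hm.
  destruct (classic (exists c', P c' /\ c' < m)) as [[c' [Hc' Hlt]]|Hnone].
  - exact (IH c' Hlt Hc').
  - exists m. split; auto. intros c' Hc'. destruct (Nat.le_gt_cases m c'); auto.
    exfalso. apply Hnone. eauto.
Qed.

Lemma filter_length_lt {A : Type} (f : A -> bool) (l : list A) (x : A) :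
  In x l -> f x = false -> length (filter f l) < length l.
Proof.
  induction l as [|y l IH]; intros Hx Hfx; [destruct Hx|]. simpl.
  destruct Hx as [->|Hx].
  - rewrite Hfx. pose proof (filter_length_le f l). lia.
  - specialize (IH Hx Hfx). destruct (f y); simpl; lia.
Qed.

Section BlockWord.

Variables (le : nat -> nat -> Prop) (N : nat).
Hypothesis le_refl : forall x, le x x.
Hypothesis le_trans : forall x y z, le x y -> le y z -> le x z.

(** This is what lets consecutive classes be written as separate decreasing runs. *)
Hypothesis le_step : forall c g, le c g -> ~ le g c ->
  exists e f f', le c e /\ le e c /\ le c f /\ ~ le f c /\ le f g /\ le f f' /\ le f' f /\ e < f'.

Definition minimal_in (R : list nat) (c : nat) : Prop :=
  In c R /\ forall d, In d R -> le d c -> le c d.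

Definition upward_closed (R : list nat) : Prop := forall x y, In x R -> le x y -> In y R.

Definition realizes (R w : list nat) : Prop :=
  Permutation w R /\
  (forall a b, In a R -> In b R -> (sameBlock w a b <-> le a b /\ le b a)) /\
  (forall a b, In a R -> In b R -> le a b -> ~ le b a -> leftOf w a b).

Definition head_max_minimal (R w : list nat) : Prop :=
  forall h, hd_error w = Some h ->
    minimal_in R h /\ forall y, In y R -> le y h -> le h y -> y <= h.

Lemma exists_minimal_in (R : list nat) : R <> [] -> exists c, minimal_in R c.
Proof.
  induction R as [|x R IH]; intros Hne; [congruence|].
  destruct R as [|y R].
  - exists x. split; [left; auto|]. intros d [<-|[]] _. apply le_refl.
  - destruct (IH ltac:(congruence)) as [c' [Hc' Hmin]].
    destruct (classic (le x c' /\ ~ le c' x)) as [[Hxc Hcx]|Hn].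
    + exists x. split; [left; auto|]. intros d [<-|Hd] Hdx; [apply le_refl|].
      apply (le_trans _ c'); auto. apply Hmin; auto. apply (le_trans _ x); auto.
    + exists c'. split; [right; auto|]. intros d [<-|Hd] Hdc; [|apply Hmin; auto].
      apply NNPP. intros Hcd. apply Hn. auto.
Qed.

Section RemoveClass.

Variables (R : list nat) (c : nat).
Hypothesis R_NoDup : NoDup R.
Hypothesis R_bounded : forall x, In x R -> x < N.
Hypothesis R_upward : upward_closed R.
Hypothesis c_minimal : minimal_in R c.
Hypothesis c_least : forall c', minimal_in R c' -> c <= c'.

Definition class_of_c : list nat :=
  filter (fun d => decP (In d R /\ le c d /\ le d c)) (countdown N).

Definition rest : list nat := filter (fun d => negb (decP (le c d /\ le d c))) R.

Lemma In_class_of_c (x : nat) : In x class_of_c <-> In x R /\ le c x /\ le x c.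
Proof.
  unfold class_of_c. rewrite filter_In, decP_true, countdown_In.
  split; [tauto|]. intros Hx. split; auto. apply R_bounded; tauto.
Qed.

Lemma In_rest (x : nat) : In x rest <-> In x R /\ ~ (le c x /\ le x c).
Proof. unfold rest. rewrite filter_In, Bool.negb_true_iff, decP_false. tauto. Qed.

Lemma class_of_c_sorted : StronglySorted gt class_of_c.
Proof. apply StronglySorted_filter, countdown_sorted. Qed.

Lemma rest_shorter : length rest < length R.
Proof.
  apply (filter_length_lt _ _ c); [apply c_minimal|].
  rewrite Bool.negb_false_iff, decP_true. split; apply le_refl.
Qed.

Lemma minimal_in_equiv (e : nat) : le c e -> le e c -> minimal_in R e.
Proof.
  intros Hce Hec. destruct c_minimal as [HcR Hmin]. split; [apply (R_upward c); auto|].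
  intros d Hd Hde. apply (le_trans _ c); auto. apply Hmin; auto. apply (le_trans _ e); auto.
Qed.

Lemma rest_upward_closed : upward_closed rest.
Proof.
  intros x y Hx Hxy. apply In_rest in Hx as [Hx Hnx]. apply In_rest.
  split; [apply (R_upward x); auto|]. intros [Hcy Hyc]. apply Hnx.
  split; [|apply (le_trans _ y); auto].
  apply c_minimal; auto. apply (le_trans _ y); auto.
Qed.

Lemma rest_minimal_above (g : nat) : minimal_in rest g ->
  exists g', In g' rest /\ le g g' /\ le g' g /\ c < g'.
Proof.
  intros Hg. assert (HgR : In g R) by apply In_rest, Hg.
  destruct (classic (minimal_in R g)) as [HgminR|HgminR].
  - exists g. split; [apply Hg|split; [apply le_refl|split; [apply le_refl|]]].
    specialize (c_least g HgminR). destruct (Nat.eq_dec c g) as [<-|]; [|lia].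
    exfalso. apply (proj2 (proj1 (In_rest c) (proj1 Hg))). split; apply le_refl.
  - assert (exists d, In d R /\ le d g /\ ~ le g d) as [d [Hd [Hdg Hgd]]].
    { apply NNPP. intros Hn. apply HgminR. split; auto. intros d Hd Hdg.
      apply NNPP. intros Hgd. apply Hn. eauto. }
    assert (Hdc : le c d /\ le d c).
    { apply NNPP. intros Hn. apply Hgd. apply Hg; auto. apply In_rest. auto. }
    assert (Hcg : le c g) by (apply (le_trans _ d); tauto).
    assert (Hgc : ~ le g c) by (intros H; apply Hgd; apply (le_trans _ c); tauto).
    destruct (le_step c g Hcg Hgc) as [e [f [f' [Hce [Hec [Hcf [Hfc [Hfg [Hff' [Hf'f Hef']]]]]]]]]].
    assert (HfR : In f rest)
      by (apply In_rest; split; [apply (R_upward c); [apply c_minimal|auto]|tauto]).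
    assert (Hgf : le g f) by (apply Hg; auto).
    exists f'. split; [|split; [|split]].
    + apply In_rest. split; [apply (R_upward f); [apply In_rest, HfR|auto]|].
      intros [_ Hf'c]. apply Hfc. apply (le_trans _ f'); auto.
    + apply (le_trans _ f); auto.
    + apply (le_trans _ f); auto.
    + specialize (c_least e (minimal_in_equiv e Hce Hec)). lia.
Qed.

Lemma head_max_minimal_app_class (w' : list nat) :
  head_max_minimal R (class_of_c ++ w').
Proof.
  intros h Hh. assert (HcB : In c class_of_c) by (apply In_class_of_c; split; [apply c_minimal|auto]).
  pose proof class_of_c_sorted as Hsorted.
  destruct class_of_c as [|x B] eqn:EB; [destruct HcB|]. injection Hh as <-.
  assert (HxB : In x class_of_c) by (rewrite EB; left; auto).
  apply In_class_of_c in HxB as [HxR [Hcx Hxc]].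
  split; [apply minimal_in_equiv; auto|]. intros y HyR Hyx Hxy.
  apply (StronglySorted_head_max x y B Hsorted). rewrite <- EB. apply In_class_of_c.
  split; [auto|split; apply (le_trans _ x); auto].
Qed.

Lemma class_of_c_last_lt (w' : list nat) : head_max_minimal rest w' ->
  class_of_c <> [] -> w' <> [] -> nth (length class_of_c - 1) class_of_c 0 < nth 0 w' 0.
Proof.
  intros Hhead _ Hw'.
  assert (HcB : In c class_of_c) by (apply In_class_of_c; split; [apply c_minimal|auto]).
  pose proof (StronglySorted_last_min _ c class_of_c_sorted HcB).
  destruct w' as [|h w'']; [congruence|]. simpl.
  destruct (Hhead h eq_refl) as [Hhmin Hhmax].
  destruct (rest_minimal_above h Hhmin) as [g' [Hg' [Hhg' [Hg'h Hcg']]]].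
  specialize (Hhmax g' Hg' Hg'h Hhg'). lia.
Qed.

Lemma realizes_app_class (w' : list nat) : realizes rest w' -> head_max_minimal rest w' ->
  realizes R (class_of_c ++ w').
Proof.
  intros [Hperm [Hblock Hleft]] Hhead.
  assert (Hin' : forall x, In x w' <-> In x rest)
    by (intros x; split; apply Permutation_in; auto using Permutation_sym).
  assert (Hcls : forall x, In x R -> ~ (le c x /\ le x c) -> In x rest) by (intros; apply In_rest; auto).
  split; [|split].
  - apply NoDup_Permutation.
    + apply NoDup_app; [apply NoDup_filter, countdown_NoDup|
        apply (Permutation_NoDup (Permutation_sym Hperm)), NoDup_filter, R_NoDup|].
      intros x Hx Hx'. apply In_class_of_c in Hx. apply Hin', In_rest in Hx'. tauto.
    + exact R_NoDup.
    + intros x. rewrite in_app_iff, In_class_of_c, Hin', In_rest.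
      split; [tauto|]. intros Hx. destruct (classic (le c x /\ le x c)); tauto.
  - intros a b Ha Hb.
    rewrite (sameBlock_app _ _ (StronglySorted_decreasing _ class_of_c_sorted)
               (class_of_c_last_lt w' Hhead)), !In_class_of_c.
    destruct (classic (le c a /\ le a c)) as [Ea|Ea], (classic (le c b /\ le b c)) as [Eb|Eb].
    + split; [intros _; split; apply (le_trans _ c)|intros _; left]; tauto.
    + split; [intros [[_ [_ Hb']]|Hs]|intros [Hab Hba]].
      * exfalso; tauto.
      * apply sameBlock_In, proj1, Hin', In_rest in Hs. tauto.
      * exfalso. apply Eb. split; apply (le_trans _ a); tauto.
    + split; [intros [[[_ Ha'] _]|Hs]|intros [Hab Hba]].
      * exfalso; tauto.
      * apply sameBlock_In, proj2, Hin', In_rest in Hs. tauto.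
      * exfalso. apply Ea. split; apply (le_trans _ b); tauto.
    + rewrite <- (Hblock a b) by (apply Hcls; auto). tauto.
  - intros a b Ha Hb Hab Hba.
    assert (Eb : ~ (le c b /\ le b c)).
    { intros [Hcb Hbc]. apply Hba. apply (le_trans _ c); auto.
      apply c_minimal; auto. apply (le_trans _ b); auto. }
    destruct (classic (le c a /\ le a c)) as [Ea|Ea].
    + apply leftOf_app_l; [apply In_class_of_c|apply Hin']; auto.
    + apply leftOf_app_r, Hleft; auto.
Qed.

End RemoveClass.

Lemma realizes_exists (R : list nat) : NoDup R -> (forall x, In x R -> x < N) ->
  upward_closed R -> exists w, realizes R w /\ head_max_minimal R w.
Proof.
  remember (length R) as k eqn:Hk. revert R Hk.
  induction k as [k IH] using (well_founded_induction Wf_nat.lt_wf).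
  intros R Hk Hnd Hbd Hup.
  destruct (list_eq_dec Nat.eq_dec R []) as [->|HRne].
  { exists []. split; [split; [constructor|split; intros ? ? []]|intros ? [=]]. }
  destruct (exists_minimal_in R HRne) as [c0 Hc0].
  destruct (least_nat (minimal_in R) c0 Hc0) as [c [Hc Hleast]].
  destruct (IH (length (rest R c)) ltac:(subst k; apply rest_shorter; auto) (rest R c) eq_refl)
    as [w' [Hw' Hhead']].
  - apply NoDup_filter; auto.
  - intros x Hx. apply Hbd. apply In_rest in Hx. tauto.
  - apply rest_upward_closed; auto.
  - exists (class_of_c R c ++ w'). split.
    + apply realizes_app_class; auto.
    + apply head_max_minimal_app_class; auto.
Qed.

End BlockWord.

(** * Intersections of shards are cones [C(w)] *)

Open Scope R_scope.

Definition shard_edge (d : hyp * (nat -> R)) (a b : nat) : Prop :=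
  match d with
  | ((i, j), p) => shard_eq i j a b \/ shard_eq i j b a \/ shard_lt i j p a b
  end.

Definition shard_edges (l : list (hyp * (nat -> R))) (a b : nat) : Prop :=
  exists d, In d l /\ shard_edge d a b.

Definition shard_le (l : list (hyp * (nat -> R))) : nat -> nat -> Prop :=
  clos_refl_trans nat (shard_edges l).

Lemma shardInter_iff_edges (n : nat) (l : list (hyp * (nat -> R))) (x : nat -> R) :
  Forall (shardData n) l ->
  shardInter n l x <-> inV n x /\ forall a b, shard_edges l a b -> x a <= x b.
Proof.
  intros Hl. rewrite Forall_forall in Hl. unfold shardInter. rewrite Forall_forall. split.
  - intros [Hx Hall]. split; [auto|]. intros a b [[[i j] p] [Hd Hab]].
    destruct (Hl _ Hd) as [Hv Hp]. specialize (Hall _ Hd). simpl in *.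
    apply (shard_iff n i j p Hv Hp) in Hall as [_ [Hij Hk]].
    destruct Hab as [[-> ->]|[[-> ->]|[[Ha [Hlt ->]]|[Hb [Hlt ->]]]]];
      [lra|lra|apply (Hk a Ha)|apply (Hk b Hb)]; auto.
  - intros [Hx Hedge]. split; [auto|]. intros [[i j] p] Hd.
    destruct (Hl _ Hd) as [Hv Hp]. simpl in *. apply (shard_iff n i j p Hv Hp).
    assert (He : forall a b, shard_edge ((i,j),p) a b -> x a <= x b)
      by (intros a b Hab; apply Hedge; exists ((i,j),p); auto).
    simpl in He. split; [auto|split].
    + apply Rle_antisym; apply He; [left|right; left]; split; auto.
    + intros k Hk. split; intros; apply He; right; right; [left|right]; auto.
Qed.

Lemma shard_le_sound (l : list (hyp * (nat -> R))) (x : nat -> R) :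
  (forall a b, shard_edges l a b -> x a <= x b) -> forall a b, shard_le l a b -> x a <= x b.
Proof. intros Hedge a b Hab. induction Hab; [apply Hedge; auto|lra|lra]. Qed.

Section ShardPreorder.

Variables (n : nat) (l : list (hyp * (nat -> R))).
Hypothesis Hl : Forall (shardData n) l.

Lemma edges_bounded (a b : nat) : shard_edges l a b -> (a < n)%nat /\ (b < n)%nat.
Proof.
  intros [[[i j] p] [Hd Hab]]. rewrite Forall_forall in Hl.
  destruct (Hl _ Hd) as [Hv _]. unfold validH in Hv; simpl in *.
  destruct Hab as [[-> ->]|[[-> ->]|[[Ha [_ ->]]|[Hb [_ ->]]]]]; lia.
Qed.

Lemma shard_le_bounded (a b : nat) : shard_le l a b -> a = b \/ (b < n)%nat.
Proof.
  intros Hab. apply clos_rt_rtn1 in Hab. induction Hab as [|y z Hyz _ IH]; auto.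
  right. apply (edges_bounded y z Hyz).
Qed.

(** Both ends of an edge of the shard of [H_{i,j}] lie in [[i, j]] and one of them is [i]. *)
Lemma edge_between (u v k : nat) : shard_edges l u v -> ((u < k < v)%nat \/ (v < k < u)%nat) ->
  exists e, (e = u \/ e = v) /\ (shard_edges l k e \/ shard_edges l e k).
Proof.
  intros [[[i j] p] [Hd Huv]] Hk. pose proof Hl as Hl'. rewrite Forall_forall in Hl'.
  destruct (Hl' _ Hd) as [Hv Hp]. simpl in *.
  apply (shardDomain_iff n i j p Hv) in Hp as [_ [_ Hpk]].
  unfold validH in Hv; simpl in Hv. exists i. split.
  - destruct Huv as [[-> ->]|[[-> ->]|[[_ [_ ->]]|[_ [_ ->]]]]]; auto.
  - assert (Hk' : (i < k < j)%nat)
      by (destruct Huv as [[-> ->]|[[-> ->]|[[? [_ ->]]|[? [_ ->]]]]]; lia).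
    destruct (Rtotal_order (p k) (p i)) as [Hki|[Hki|Hki]]; [|exfalso; apply (Hpk k Hk'); auto|].
    + left. exists ((i,j),p). split; [auto|]. right; right; left. auto.
    + right. exists ((i,j),p). split; [auto|]. right; right; right. auto.
Qed.

Lemma shard_le_between (i c d : nat) : clos_refl_trans_1n nat (shard_edges l) c d ->
  shard_le l d i -> shard_le l i c ->
  forall k, ((c < k < d)%nat \/ (d < k < c)%nat) -> shard_le l k i \/ shard_le l i k.
Proof.
  intros Hcd. induction Hcd as [c|c c' d Hcc' Hc'd IH]; intros Hdi Hic k Hk; [lia|].
  assert (Hc'i : shard_le l c' i) by (eapply rt_trans; [apply clos_rt1n_rt, Hc'd|exact Hdi]).
  assert (Hci : shard_le l c i) by (eapply rt_trans; [apply rt_step, Hcc'|exact Hc'i]).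
  assert (Hic' : shard_le l i c') by (eapply rt_trans; [exact Hic|apply rt_step, Hcc']).
  destruct (Nat.eq_dec k c') as [->|Hkc']; [left; auto|].
  destruct (classic ((c < k < c')%nat \/ (c' < k < c)%nat)) as [Hb|Hb].
  - destruct (edge_between c c' k Hcc' Hb) as [e [He [Hke|Hek]]].
    + left. apply (rt_trans _ _ _ e); [apply rt_step; auto|]. destruct He as [->| ->]; auto.
    + right. apply (rt_trans _ _ _ e); [|apply rt_step; auto]. destruct He as [->| ->]; auto.
  - apply IH; auto. lia.
Qed.

Lemma shard_le_convex (i j k : nat) : shard_le l i j -> shard_le l j i -> (i < k < j)%nat ->
  shard_le l k i \/ shard_le l i k.
Proof.
  intros Hij Hji Hk. apply (shard_le_between i i j); auto.
  - apply clos_rt_rt1n; auto.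
  - apply rt_refl.
Qed.

Lemma edge_leaving_class (e f : nat) : shard_edges l e f -> ~ shard_le l f e ->
  exists f', shard_le l f f' /\ shard_le l f' f /\ (e < f')%nat.
Proof.
  intros [[[i j] p] [Hd Hef]] Hfe. rewrite Forall_forall in Hl.
  destruct (Hl _ Hd) as [Hv _]. unfold validH in Hv; simpl in *.
  assert (Hedge : forall a b, shard_edge ((i,j),p) a b -> shard_le l a b)
    by (intros; apply rt_step; exists ((i,j),p); auto).
  simpl in Hedge.
  destruct Hef as [[-> ->]|[[-> ->]|[[Ha [Hlt ->]]|[Hb [Hlt ->]]]]].
  - exfalso. apply Hfe, Hedge. right; left. split; auto.
  - exfalso. apply Hfe, Hedge. left. split; auto.
  - exists j. split; [|split; [|lia]]; apply Hedge; [left|right; left]; split; auto.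
  - exists f. split; [apply rt_refl|split; [apply rt_refl|lia]].
Qed.

Lemma path_leaving_class (c x g : nat) : clos_refl_trans_1n nat (shard_edges l) x g ->
  shard_le l c x -> shard_le l x c -> ~ shard_le l g c ->
  exists e f, shard_le l c e /\ shard_le l e c /\ shard_edges l e f /\ ~ shard_le l f c /\
    shard_le l f g.
Proof.
  intros Hxg. induction Hxg as [x|x y g Hxy Hyg IH]; intros Hcx Hxc Hgc; [contradiction|].
  destruct (classic (shard_le l y c)) as [Hyc|Hyc].
  - apply IH; auto. eapply rt_trans; [exact Hcx|apply rt_step; auto].
  - exists x, y. repeat split; auto. apply clos_rt1n_rt; auto.
Qed.

Lemma shard_le_step (c g : nat) : shard_le l c g -> ~ shard_le l g c ->
  exists e f f', shard_le l c e /\ shard_le l e c /\ shard_le l c f /\ ~ shard_le l f c /\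
    shard_le l f g /\ shard_le l f f' /\ shard_le l f' f /\ (e < f')%nat.
Proof.
  intros Hcg Hgc.
  destruct (path_leaving_class c c g (clos_rt_rt1n _ _ _ _ Hcg) (rt_refl _ _ _) (rt_refl _ _ _) Hgc)
    as [e [f [Hce [Hec [Hef [Hfc Hfg]]]]]].
  assert (Hfe : ~ shard_le l f e) by (intros Hfe; apply Hfc; eapply rt_trans; eauto).
  destruct (edge_leaving_class e f Hef Hfe) as [f' [Hff' [Hf'f Hlt]]].
  exists e, f, f'. repeat split; auto. eapply rt_trans; [exact Hce|apply rt_step; auto].
Qed.

Lemma realizes_shard_le : exists w, isPerm n w /\ realizes (shard_le l) (seq 0 n) w.
Proof.
  destruct (realizes_exists (shard_le l) n (fun x => rt_refl _ _ x) (fun x y z => rt_trans _ _ x y z)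
              shard_le_step (seq 0 n) (seq_NoDup n 0))
    as [w [Hw _]].
  - intros x Hx. apply in_seq in Hx. lia.
  - intros x y Hx Hxy. apply in_seq in Hx. apply in_seq.
    destruct (shard_le_bounded x y Hxy); lia.
  - exists w. split; [apply Hw|exact Hw].
Qed.

Section RealizingWord.

Variable w : list nat.
Hypothesis Hw : realizes (shard_le l) (seq 0 n) w.

Let In_seq (a : nat) : (a < n)%nat -> In a (seq 0 n).
Proof. intros. apply in_seq. lia. Qed.

Lemma realizes_NoDup : NoDup w.
Proof. apply (Permutation_NoDup (Permutation_sym (proj1 Hw))), seq_NoDup. Qed.

Lemma Ccone_of_edges (x : nat -> R) :
  inV n x -> (forall a b, shard_edges l a b -> x a <= x b) -> Ccone n w x.
Proof.
  destruct Hw as [_ [Hblock Hleft]]. intros Hx Hedge.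
  pose proof (shard_le_sound l x Hedge) as Hle.
  split; [auto|split].
  - intros i j Hi Hj Hij. apply Hblock in Hij as [Hij Hji]; auto.
    apply Rle_antisym; apply Hle; auto.
  - intros i k j Hikj Hj Hij Hki.
    apply Hblock in Hij as [Hij Hji]; try (apply In_seq; lia).
    assert (Hnki : ~ (shard_le l k i /\ shard_le l i k))
      by (intros Hkik; apply Hki, Hblock; auto; apply In_seq; lia).
    pose proof realizes_NoDup as Hnd.
    destruct (shard_le_convex i j k Hij Hji Hikj) as [Hk|Hk].
    + pose proof (Hleft k i ltac:(apply In_seq; lia) ltac:(apply In_seq; lia) Hk ltac:(tauto)).
      split; intros HL; [apply Hle; auto|exfalso; apply (leftOf_asym w k i); auto].
    + pose proof (Hleft i k ltac:(apply In_seq; lia) ltac:(apply In_seq; lia) Hk ltac:(tauto)).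
      split; intros HL; [exfalso; apply (leftOf_asym w k i); auto|apply Hle; auto].
Qed.

Lemma edges_of_Ccone (x : nat -> R) : Ccone n w x -> forall a b, shard_edges l a b -> x a <= x b.
Proof.
  destruct Hw as [_ [Hblock Hleft]]. intros [Hx [HCeq HCle]] a b Hab.
  destruct (edges_bounded a b Hab) as [Ha Hb].
  destruct (classic (shard_le l b a)) as [Hba|Hba].
  - assert (x a = x b); [|lra]. apply HCeq; auto. apply Hblock; auto. split; auto. apply rt_step; auto.
  - assert (HL : leftOf w a b) by (apply Hleft; auto; apply rt_step; auto).
    destruct Hab as [[[i j] p] [Hd Hab]]. pose proof Hl as Hl'. rewrite Forall_forall in Hl'.
    destruct (Hl' _ Hd) as [Hv _]. unfold validH in Hv; simpl in *.
    assert (Hedge : forall a b, shard_edge ((i,j),p) a b -> shard_le l a b)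
      by (intros; apply rt_step; exists ((i,j),p); auto).
    simpl in Hedge.
    assert (Hij : sameBlock w i j)
      by (apply Hblock; try (apply In_seq; lia); split; apply Hedge; [left|right; left]; split; auto).
    destruct Hab as [[-> ->]|[[-> ->]|[[Ha' [Hlt ->]]|[Hb' [Hlt ->]]]]].
    + exfalso. apply Hba, Hedge. right; left. split; auto.
    + exfalso. apply Hba, Hedge. left. split; auto.
    + apply (HCle i a j); auto; try lia. intros Hai. apply Hblock in Hai; auto. tauto.
    + apply (HCle i b j); auto; try lia. intros Hbi. apply Hblock in Hbi; auto. tauto.
Qed.

End RealizingWord.

End ShardPreorder.

Lemma shardInter_is_Ccone (n : nat) (l : list (hyp * (nat -> R))) : Forall (shardData n) l ->
  exists w, isPerm n w /\ forall x, shardInter n l x <-> Ccone n w x.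
Proof.
  intros Hl. destruct (realizes_shard_le n l Hl) as [w [Hperm Hw]].
  exists w. split; [exact Hperm|]. intros x. rewrite (shardInter_iff_edges n l x Hl). split.
  - intros [Hx Hedge]. apply (Ccone_of_edges n l Hl w Hw); auto.
  - intros Hx. split; [apply Hx|]. apply (edges_of_Ccone n l Hl w Hw x Hx).
Qed.

(** * Each cone [C(w)] is an intersection of shards *)

Definition side_point (n : nat) (w : list nat) (i j : nat) : nat -> R :=
  center n (fun m => if decP (m = i \/ m = j) then 0 else if decP (leftOf w m i) then -1 else 1).

Definition block_shards (n : nat) (w : list nat) : list (hyp * (nat -> R)) :=
  map (fun h => (h, side_point n w (fst h) (snd h)))
    (filter (fun h => decP ((fst h < snd h < n)%nat /\ sameBlock w (fst h) (snd h)))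
       (list_prod (seq 0 n) (seq 0 n))).

Lemma In_block_shards (n : nat) (w : list nat) (d : hyp * (nat -> R)) :
  In d (block_shards n w) <->
  exists i j, (i < j < n)%nat /\ sameBlock w i j /\ d = ((i,j), side_point n w i j).
Proof.
  unfold block_shards. rewrite in_map_iff. split.
  - intros [[i j] [<- Hij]]. apply filter_In in Hij as [_ Hij]. rewrite decP_true in Hij.
    exists i, j. simpl in *. repeat split; tauto.
  - intros [i [j [Hij [Hb ->]]]]. exists (i,j). split; [reflexivity|].
    apply filter_In. rewrite in_prod_iff, !in_seq, decP_true. simpl. repeat split; auto; lia.
Qed.

Lemma side_point_values (n : nat) (w : list nat) (i j : nat) : (i < j < n)%nat ->
  side_point n w i j i = side_point n w i j j /\
  forall k, (i < k < j)%nat ->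
    (side_point n w i j k < side_point n w i j i <-> leftOf w k i) /\
    (side_point n w i j i < side_point n w i j k <-> ~ leftOf w k i).
Proof.
  intros Hij. unfold side_point. split.
  - apply center_eq; try lia. rewrite !(proj2 (decP_true _)) by auto. reflexivity.
  - intros k Hk. rewrite !center_lt by lia.
    rewrite (proj2 (decP_true (i = i \/ i = j))) by auto.
    rewrite (proj2 (decP_false (k = i \/ k = j))) by lia.
    destruct (decP (leftOf w k i)) eqn:E; [rewrite decP_true in E|rewrite decP_false in E];
      split; split; intros; try lra; tauto.
Qed.

Lemma shardData_side_point (n : nat) (w : list nat) (i j : nat) : (i < j < n)%nat ->
  shardData n ((i,j), side_point n w i j).
Proof.
  intros Hij. destruct (side_point_values n w i j Hij) as [Hpij Hpk].
  split; simpl; [unfold validH; simpl; lia|].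
  apply shardDomain_iff; [unfold validH; simpl; lia|]. split; [apply center_inV; lia|].
  split; [auto|]. intros k Hk. destruct (Hpk k Hk) as [Hlt Hgt].
  destruct (classic (leftOf w k i)) as [L|L]; [apply Hlt in L|apply Hgt in L]; lra.
Qed.

Lemma shard_side_point_iff (n : nat) (w : list nat) (i j : nat) (x : nat -> R) :
  (i < j < n)%nat ->
  shard n (i,j) (side_point n w i j) x <-> inV n x /\ x i = x j /\
    forall k, (i < k < j)%nat -> (leftOf w k i -> x k <= x i) /\ (~ leftOf w k i -> x i <= x k).
Proof.
  intros Hij. destruct (shardData_side_point n w i j Hij) as [Hv Hp]. simpl in Hv, Hp.
  rewrite (shard_iff n i j _ Hv Hp). destruct (side_point_values n w i j Hij) as [_ Hpk].
  split; intros [Hx [Hxij Hxk]]; split; auto; split; auto; intros k Hk;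
    specialize (Hxk k Hk); specialize (Hpk k Hk); split; intros; apply Hxk, Hpk; auto.
Qed.

Lemma Ccone_is_shardInter (n : nat) (w : list nat) : isPerm n w ->
  forall x, Ccone n w x <-> shardInter n (block_shards n w) x.
Proof.
  intros Hw.
  assert (Hnd : NoDup w) by apply (Permutation_NoDup (Permutation_sym Hw)), seq_NoDup.
  assert (Hin : forall a, (a < n)%nat -> In a w)
    by (intros a Ha; apply (Permutation_in _ (Permutation_sym Hw)), in_seq; lia).
  intros x. unfold shardInter. rewrite Forall_forall. split.
  - intros [Hx [HCeq HCle]]. split; [auto|]. intros d Hd.
    apply In_block_shards in Hd as [i [j [Hij [Hb ->]]]]. simpl.
    apply shard_side_point_iff; auto. split; [auto|split; [apply HCeq; auto; lia|]].
    intros k Hk. destruct (classic (sameBlock w k i)) as [Hki|Hki].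
    + assert (x k = x i) by (apply HCeq; auto; lia). split; intros; lra.
    + split; intros L; [apply (HCle i k j); auto; lia|].
      destruct (leftOf_total w i k (Hin i ltac:(lia)) (Hin k ltac:(lia)) ltac:(lia)) as [L'|L'];
        [apply (HCle i k j); auto; lia|contradiction].
  - intros [Hx Hall].
    assert (Hsh : forall i j, (i < j < n)%nat -> sameBlock w i j -> x i = x j /\
       forall k, (i < k < j)%nat -> (leftOf w k i -> x k <= x i) /\ (~ leftOf w k i -> x i <= x k)).
    { intros i j Hij Hb. apply (shard_side_point_iff n w i j x Hij), (Hall ((i,j), _)).
      apply In_block_shards. eauto. }
    split; [auto|split].
    + intros i j Hi Hj Hb. destruct (Nat.lt_total i j) as [H|[<-|H]]; [|reflexivity|].
      * apply (Hsh i j); auto.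
      * symmetry. apply (Hsh j i); auto using sameBlock_sym.
    + intros i k j Hikj Hj Hb Hki. destruct (Hsh i j ltac:(lia) Hb) as [_ Hk].
      destruct (Hk k Hikj) as [Hleft Hright]. split; intros L; [auto|].
      apply Hright. apply leftOf_asym; auto.
Qed.

Theorem mainTheorem4 (n : nat) :
  (forall l, Forall (shardData n) l ->
     exists w, isPerm n w /\ forall x, shardInter n l x <-> Ccone n w x) /\
  (forall w, isPerm n w -> isShardIntersection n (Ccone n w)).
Proof.
  split; [exact (shardInter_is_Ccone n)|].
  intros w Hw. exists (block_shards n w). split; [|exact (Ccone_is_shardInter n w Hw)].
  apply Forall_forall. intros d Hd. apply In_block_shards in Hd as [i [j [Hij [_ ->]]]].
  apply shardData_side_point; auto.
Qed.
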